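(* Let $(X,d)$ be an ultra-metric space and let $\pi:G\times X\to X$ be a continuous action of a topological group $G$ which is $\pi$-uniform with respect to the uniformity of $d$. Suppose some orbit $Gx_0$ ($x_0\in X$) is $d$-bounded. Then there exist an ultra-normed Boolean group $(E,\|\cdot\|)$ on which $G$ acts continuously by group automorphisms (with respect to the topology of $\|\cdot\|$) and a $G$-equivariant isometric embedding $\alpha:X\hookrightarrow E$ (i.e. $\|\alpha(x)-\alpha(y)\|=d(x,y)$) such that $\alpha(X)$ is closed in $E$.
   Context: An ultra-metric is a metric with $d(x,z)\le\max\{d(x,y),d(y,z)\}$. An ultra-norm on an abelian group $E$ is a function $\|\cdot\|:E\to[0,\infty)$ with $\|u\|=0\iff u=0$, $\|u\|=\|-u\|$, and $\|u+v\|\le\max\{\|u\|,\|v\|\}$; $E$ is topologized by the metric $\|u-v\|$. A Boolean group is an abelian group with $x+x=0$ for all $x$. An action on a uniform space is $\pi$-uniform if for every entourage $\varepsilon$ and $g_0\in G$ there exist an entourage $\delta$ and a neighborhood $O$ of $g_0$ such that $(gx,gy)\in\varepsilon$ whenever $(x,y)\in\delta$ and $g\in O$. *)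

From Stdlib Require Export Reals.
Open Scope R_scope.

Definition is_ultrametric {X : Type} (d : X -> X -> R) : Prop :=
  (forall x y, 0 <= d x y) /\
  (forall x y, d x y = 0 <-> x = y) /\
  (forall x y, d x y = d y x) /\
  (forall x y z, d x z <= Rmax (d x y) (d y z)).

Definition is_topology {T : Type} (opn : (T -> Prop) -> Prop) : Prop :=
  opn (fun _ => True) /\
  (forall U V, opn U -> opn V -> opn (fun x => U x /\ V x)) /\
  (forall F : (T -> Prop) -> Prop, (forall U, F U -> opn U) ->
     opn (fun x => exists U, F U /\ U x)).

Definition is_group {G : Type} (mul : G -> G -> G) (inv : G -> G) (e : G) : Prop :=
  (forall a b c, mul a (mul b c) = mul (mul a b) c) /\
  (forall a, mul e a = a) /\ (forall a, mul a e = a) /\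
  (forall a, mul (inv a) a = e) /\ (forall a, mul a (inv a) = e).

Definition is_topological_group {G : Type} (mul : G -> G -> G) (inv : G -> G)
    (e : G) (opn : (G -> Prop) -> Prop) : Prop :=
  is_group mul inv e /\ is_topology opn /\
  (forall g h U, opn U -> U (mul g h) ->
     exists V W, opn V /\ opn W /\ V g /\ W h /\
       (forall g' h', V g' -> W h' -> U (mul g' h'))) /\
  (forall g U, opn U -> U (inv g) ->
     exists V, opn V /\ V g /\ (forall g', V g' -> U (inv g'))).

Definition is_action {G Y : Type} (mul : G -> G -> G) (e : G) (act : G -> Y -> Y) : Prop :=
  (forall y, act e y = y) /\
  (forall g h y, act (mul g h) y = act g (act h y)).

Definition action_continuous {G Y : Type} (opn : (G -> Prop) -> Prop)
    (dist : Y -> Y -> R) (act : G -> Y -> Y) : Prop :=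
  forall g y eps, 0 < eps ->
    exists O delta, opn O /\ O g /\ 0 < delta /\
      forall h z, O h -> dist z y < delta -> dist (act h z) (act g y) < eps.

(* pi-uniformity w.r.t. the uniformity of the metric d
   (basic entourages {(x,y) | d x y < eps}). *)
Definition pi_uniform {G X : Type} (opn : (G -> Prop) -> Prop)
    (d : X -> X -> R) (pi : G -> X -> X) : Prop :=
  forall eps g0, 0 < eps ->
    exists delta O, 0 < delta /\ opn O /\ O g0 /\
      forall g x y, O g -> d x y < delta -> d (pi g x) (pi g y) < eps.

Definition bounded_orbit {G X : Type} (d : X -> X -> R) (pi : G -> X -> X) (x0 : X) : Prop :=
  exists M, forall g h, d (pi g x0) (pi h x0) <= M.

Definition is_boolean_group {E : Type} (add : E -> E -> E) (zero : E) (opp : E -> E) : Prop :=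
  (forall u v w, add u (add v w) = add (add u v) w) /\
  (forall u v, add u v = add v u) /\
  (forall u, add zero u = u) /\
  (forall u, add (opp u) u = zero) /\
  (forall u, add u u = zero).

Definition is_ultranorm {E : Type} (add : E -> E -> E) (zero : E) (opp : E -> E)
    (nrm : E -> R) : Prop :=
  (forall u, 0 <= nrm u) /\
  (forall u, nrm u = 0 <-> u = zero) /\
  (forall u, nrm u = nrm (opp u)) /\
  (forall u v, nrm (add u v) <= Rmax (nrm u) (nrm v)).

Definition is_group_hom {E : Type} (add : E -> E -> E) (f : E -> E) : Prop :=
  forall u v, f (add u v) = add (f u) (f v).

Definition metric_closed {E : Type} (dist : E -> E -> R) (A : E -> Prop) : Prop :=
  forall u, (forall eps, 0 < eps -> exists a, A a /\ dist u a < eps) -> A u.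

From Stdlib Require Import Lra List Bool Btauto.
From Stdlib Require Import Classical ClassicalEpsilon FunctionalExtensionality ProofIrrelevance.
Open Scope R_scope.

(* Let B range over the "uniformly open" subsets of X (unions of open r-balls
   for a fixed r > 0) and send x to the indicator a(x) of {B | x ∈ B}.  The
   group generated by the a(x) under pointwise xor is Boolean; the norm of f is
   the supremum of the radii r for which f = 1 on an r-uniformly open set B,
   where r may not exceed the weight max(1, d(u, x0)) of any u ∈ B.  The
   weights keep norms finite, and ultrametric balls are uniformly open, so
   ‖a(x) + a(y)‖ = d(x, y).  G acts by (g f)(B) = f(g⁻¹B); π-uniformity makes
   g⁻¹B uniformly open again and gives continuity of the action.  A sum of
   zero or of at least two distinct a(z) is at a fixed positive distance from
   every a(x), witnessed by a small ball around one of the z, so the image of X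
   is closed. *)

Ltac rmax_lra := unfold Rmax, Rmin in *; repeat destruct Rle_dec; lra.

Definition decide (P : Prop) : bool :=
  if excluded_middle_informative P then true else false.

Lemma decide_true (P : Prop) : P -> decide P = true.
Proof. unfold decide; destruct excluded_middle_informative; tauto. Qed.

Lemma decide_false (P : Prop) : ~ P -> decide P = false.
Proof. unfold decide; destruct excluded_middle_informative; tauto. Qed.

Lemma decide_true_inv (P : Prop) : decide P = true -> P.
Proof. unfold decide; destruct excluded_middle_informative; congruence. Qed.

Lemma decide_iff (P Q : Prop) : (P <-> Q) -> decide P = decide Q.
Proof.
  intro H; destruct (classic P); [rewrite !decide_true | rewrite !decide_false]; tauto.
Qed.

(* The least upper bound of [S ∪ {0}], with junk value [0] when it is unbounded. *)
Definition sup0 (S : R -> Prop) : R :=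
  match excluded_middle_informative (bound (fun r => r = 0 \/ S r)) with
  | left H => proj1_sig (completeness _ H (ex_intro _ 0 (or_introl eq_refl)))
  | right _ => 0
  end.

Lemma sup0_lub (S : R -> Prop) :
  bound (fun r => r = 0 \/ S r) -> is_lub (fun r => r = 0 \/ S r) (sup0 S).
Proof.
  intro H; unfold sup0; destruct excluded_middle_informative; [|tauto].
  now destruct completeness.
Qed.

Lemma sup0_ge0 (S : R -> Prop) : 0 <= sup0 S.
Proof.
  unfold sup0; destruct excluded_middle_informative; [|lra].
  destruct completeness as [m Hm]; simpl; apply Hm; now left.
Qed.

Lemma sup0_ub (S : R -> Prop) (K r : R) :
  (forall s, S s -> s <= K) -> S r -> r <= sup0 S.
Proof.
  intros HK Hr.
  assert (Hb : bound (fun r => r = 0 \/ S r)).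
  { exists (Rmax 0 K); intros s [->|Hs]; [|specialize (HK s Hs)]; rmax_lra. }
  apply (sup0_lub S Hb); now right.
Qed.

Lemma sup0_le (S : R -> Prop) (K : R) :
  0 <= K -> (forall s, S s -> s <= K) -> sup0 S <= K.
Proof.
  intros HK0 HK.
  assert (Hb : bound (fun r => r = 0 \/ S r)) by (exists K; intros s [->|Hs]; auto).
  apply (sup0_lub S Hb); intros s [->|Hs]; auto.
Qed.

Section WeightedSupNorm.

Context {I : Type} (W : I -> R -> Prop).

Definition fxor (f g : I -> bool) : I -> bool := fun i => xorb (f i) (g i).
Definition fzero : I -> bool := fun _ => false.

Definition wnorm (f : I -> bool) : R := sup0 (fun r => exists i, f i = true /\ W i r).

Definition wbounded (f : I -> bool) : Prop :=
  exists K, forall i r, f i = true -> W i r -> r <= K.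

Lemma fxor_boolean_group : is_boolean_group fxor fzero (fun f => f).
Proof.
  repeat split; intros; apply functional_extensionality; intro i; unfold fxor, fzero; btauto.
Qed.

Lemma wbounded_fzero : wbounded fzero.
Proof. exists 0; discriminate. Qed.

Lemma wbounded_fxor (f g : I -> bool) : wbounded f -> wbounded g -> wbounded (fxor f g).
Proof.
  intros [Kf Hf] [Kg Hg]; exists (Rmax Kf Kg); intros i r Hi Hr.
  unfold fxor in Hi; destruct (f i) eqn:Efi.
  - specialize (Hf i r Efi Hr); rmax_lra.
  - specialize (Hg i r Hi Hr); rmax_lra.
Qed.

Lemma wnorm_ge (f : I -> bool) (i : I) (r : R) :
  wbounded f -> f i = true -> W i r -> r <= wnorm f.
Proof.
  intros [K HK] Hi Hr; apply (sup0_ub _ K); [intros s [j [Hj Hs]]|]; eauto.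
Qed.

Lemma wnorm_ge0 (f : I -> bool) : 0 <= wnorm f.
Proof. apply sup0_ge0. Qed.

Lemma wnorm_le (f : I -> bool) (K : R) :
  0 <= K -> (forall i r, f i = true -> W i r -> r <= K) -> wnorm f <= K.
Proof. intros HK H; apply sup0_le; [|intros s [i [Hi Hs]]]; eauto. Qed.

Lemma wnorm_fxor_le (f g : I -> bool) :
  wbounded f -> wbounded g -> wnorm (fxor f g) <= Rmax (wnorm f) (wnorm g).
Proof.
  intros Hf Hg; apply wnorm_le; [pose proof (wnorm_ge0 f); rmax_lra|].
  intros i r Hi Hr; unfold fxor in Hi; destruct (f i) eqn:Efi.
  - pose proof (wnorm_ge f i r Hf Efi Hr); rmax_lra.
  - pose proof (wnorm_ge g i r Hg Hi Hr); rmax_lra.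
Qed.

Lemma wnorm_fzero : wnorm fzero = 0.
Proof. apply Rle_antisym; [apply wnorm_le; [lra | discriminate] | apply wnorm_ge0]. Qed.

Lemma wnorm_eq0 (f : I -> bool) :
  wbounded f -> (forall i, f i = true -> exists r, 0 < r /\ W i r) ->
  wnorm f = 0 -> f = fzero.
Proof.
  intros Hb Hpos H0; apply functional_extensionality; intro i; unfold fzero.
  destruct (f i) eqn:Efi; [|reflexivity].
  destruct (Hpos i Efi) as [r [Hr HW]].
  pose proof (wnorm_ge f i r Hb Efi HW); lra.
Qed.

End WeightedSupNorm.

Ltac fxor_ext := apply functional_extensionality; intro; unfold fxor, fzero; btauto.

Section UltrametricSpace.

Variables (X : Type) (d : X -> X -> R) (x0 : X).
Hypothesis d_ultrametric : is_ultrametric d.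

Lemma d_ge0 (x y : X) : 0 <= d x y.
Proof. apply d_ultrametric. Qed.

Lemma d_sym (x y : X) : d x y = d y x.
Proof. apply d_ultrametric. Qed.

Lemma d_max (x y z : X) : d x z <= Rmax (d x y) (d y z).
Proof. apply d_ultrametric. Qed.

Lemma d_xx (x : X) : d x x = 0.
Proof. now apply d_ultrametric. Qed.

Lemma d_gt0 (x y : X) : x <> y -> 0 < d x y.
Proof.
  intro Hxy; destruct (d_ge0 x y) as [|H]; [auto|].
  exfalso; apply Hxy, d_ultrametric; auto.
Qed.

Definition weight (x : X) : R := Rmax 1 (d x x0).

Lemma weight_ge1 (x : X) : 1 <= weight x.
Proof. unfold weight; rmax_lra. Qed.

Lemma weight_max (x z : X) : weight x <= Rmax (d x z) (weight z).
Proof. unfold weight; pose proof (d_max x z x0); rmax_lra. Qed.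

Lemma d_le_weight (x y : X) : d x y <= Rmax (weight x) (weight y).
Proof.
  unfold weight; pose proof (d_max x x0 y) as H; rewrite (d_sym x0 y) in H; rmax_lra.
Qed.

Definition uniformly_open (B : X -> Prop) : Prop :=
  exists r, 0 < r /\ forall u v, B u -> d u v < r -> B v.

Definition admissible (B : X -> Prop) (r : R) : Prop :=
  0 < r /\ (forall u v, B u -> d u v < r -> B v) /\ (forall u, B u -> r <= weight u).

Lemma admissible_uniformly_open (B : X -> Prop) (r : R) :
  admissible B r -> uniformly_open B.
Proof. intros [Hr [Hopen _]]; now exists r. Qed.

Lemma admissible_of_open (B : X -> Prop) (r : R) :
  0 < r -> r <= 1 -> (forall u v, B u -> d u v < r -> B v) -> admissible B r.
Proof.
  intros Hr Hr1 Hopen; repeat split; auto.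
  intros u _; pose proof (weight_ge1 u); lra.
Qed.

Lemma uniformly_open_admissible (B : X -> Prop) :
  uniformly_open B -> exists r, 0 < r /\ admissible B r.
Proof.
  intros [r [Hr Hopen]]; exists (Rmin r 1).
  assert (Hpos : 0 < Rmin r 1) by rmax_lra.
  split; [auto|]; apply admissible_of_open; [auto | rmax_lra|].
  intros u v Bu Huv; apply (Hopen u); [auto | rmax_lra].
Qed.

Lemma ball_admissible (c : X) (r : R) :
  0 < r -> r <= weight c -> admissible (fun z => d c z < r) r.
Proof.
  intros Hr Hw; repeat split; auto.
  - intros u v Hu Huv; pose proof (d_max c u v); rmax_lra.
  - intros u Hu; pose proof (weight_max c u); rmax_lra.
Qed.

Definition F : Type := (X -> Prop) -> bool.

Definition point_mass (x : X) : F := fun B => decide (B x /\ uniformly_open B).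

Definition fsum (l : list X) : F := fold_right (fun (x : X) (f : F) => fxor (point_mass x) f) fzero l.

Definition finite_sum (f : F) : Prop := exists l, f = fsum l.

Definition fnorm : F -> R := wnorm admissible.

Lemma fsum_nil : fsum nil = fzero.
Proof. reflexivity. Qed.

Lemma fsum_cons (x : X) (l : list X) : fsum (x :: l) = fxor (point_mass x) (fsum l).
Proof. reflexivity. Qed.

Lemma fsum_app (l1 l2 : list X) : fsum (l1 ++ l2) = fxor (fsum l1) (fsum l2).
Proof.
  induction l1 as [|a l1 IH]; [reflexivity|].
  rewrite <- app_comm_cons, !fsum_cons, IH; fxor_ext.
Qed.

Lemma point_mass_true (x : X) (B : X -> Prop) :
  point_mass x B = true -> B x /\ uniformly_open B.
Proof. apply decide_true_inv. Qed.

Lemma point_mass_eq_near (B : X -> Prop) (r : R) (x y : X) :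
  admissible B r -> d x y < r -> point_mass x B = point_mass y B.
Proof.
  intros [_ [Hopen _]] Hxy; apply decide_iff.
  assert (d y x < r) by (rewrite d_sym; auto).
  split; intros [HB Hu]; split; eauto.
Qed.

Lemma fsum_true (l : list X) (B : X -> Prop) :
  fsum l B = true -> uniformly_open B.
Proof.
  induction l as [|a l IH]; [discriminate|].
  rewrite fsum_cons; unfold fxor; destruct (point_mass a B) eqn:Ea; simpl.
  - intros _; now apply (point_mass_true a).
  - exact IH.
Qed.

Lemma fsum_false (l : list X) (B : X -> Prop) :
  (forall z, In z l -> ~ B z) -> fsum l B = false.
Proof.
  induction l as [|a l IH]; intros Hl; [reflexivity|].
  rewrite fsum_cons; unfold fxor, point_mass.
  rewrite IH, decide_false; [reflexivity| |intros; apply Hl; now right].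
  intros [Ha _]; apply (Hl a); [now left | auto].
Qed.

Lemma fsum_isolated (L : list X) (c : X) (B : X -> Prop) :
  NoDup L -> In c L -> B c -> uniformly_open B ->
  (forall z, In z L -> z <> c -> ~ B z) -> fsum L B = true.
Proof.
  induction L as [|a L IH]; [intros _ []|].
  intros HL Hc HB Hu Hiso; inversion HL as [|? ? HaL HL']; subst.
  rewrite fsum_cons; unfold fxor, point_mass.
  destruct (classic (a = c)) as [<-|Hac].
  - rewrite decide_true, fsum_false; [reflexivity| |tauto].
    intros z Hz; apply Hiso; [now right | congruence].
  - destruct Hc as [|Hc]; [contradiction|].
    rewrite decide_false, IH; auto.
    + intros z Hz; apply Hiso; now right.
    + intros [Ha _]; apply (Hiso a); [now left | auto | auto].
Qed.

Lemma fsum_nodup (l : list X) : exists L, NoDup L /\ fsum l = fsum L.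
Proof.
  induction l as [|a l [L [HL Hl]]]; [exists nil; split; [constructor | reflexivity]|].
  rewrite fsum_cons, Hl.
  destruct (classic (In a L)) as [Ha|Ha].
  - destruct (in_split _ _ Ha) as [l1 [l2 ->]].
    exists (l1 ++ l2); split; [eapply NoDup_remove_1; eauto|].
    rewrite !fsum_app, fsum_cons; fxor_ext.
  - exists (a :: L); split; [now constructor | reflexivity].
Qed.

Lemma finite_sum_fzero : finite_sum fzero.
Proof. now exists nil. Qed.

Lemma finite_sum_point_mass (x : X) : finite_sum (point_mass x).
Proof. exists (x :: nil); rewrite fsum_cons, fsum_nil; fxor_ext. Qed.

Lemma finite_sum_fxor (f g : F) : finite_sum f -> finite_sum g -> finite_sum (fxor f g).
Proof. intros [l1 ->] [l2 ->]; exists (l1 ++ l2); now rewrite fsum_app. Qed.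

Lemma finite_sum_bounded (f : F) : finite_sum f -> wbounded admissible f.
Proof.
  intros [l ->]; induction l as [|a l IH]; [apply wbounded_fzero|].
  apply wbounded_fxor; [|exact IH].
  exists (weight a); intros B r Ha [_ [_ Hw]]; apply Hw, (point_mass_true a B Ha).
Qed.

Lemma fnorm_ge (f : F) (B : X -> Prop) (r : R) :
  finite_sum f -> f B = true -> admissible B r -> r <= fnorm f.
Proof. intros Hf; apply wnorm_ge, finite_sum_bounded, Hf. Qed.

Lemma fnorm_ge0 (f : F) : 0 <= fnorm f.
Proof. apply wnorm_ge0. Qed.

Lemma fnorm_fxor_le (f g : F) :
  finite_sum f -> finite_sum g -> fnorm (fxor f g) <= Rmax (fnorm f) (fnorm g).
Proof. intros Hf Hg; apply wnorm_fxor_le; now apply finite_sum_bounded. Qed.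

Lemma fnorm_eq0 (f : F) : finite_sum f -> fnorm f = 0 -> f = fzero.
Proof.
  intros Hf; apply wnorm_eq0; [now apply finite_sum_bounded|].
  intros B HB; destruct Hf as [l ->].
  now apply uniformly_open_admissible, (fsum_true l).
Qed.

Lemma fnorm_point_mass_diff_ge (x y : X) :
  x <> y -> d x y <= weight x -> d x y <= fnorm (fxor (point_mass x) (point_mass y)).
Proof.
  intros Hxy Hw; pose proof (d_gt0 x y Hxy).
  assert (Hball := ball_admissible x (d x y) ltac:(auto) Hw).
  apply (fnorm_ge _ (fun z => d x z < d x y) _ (finite_sum_fxor _ _
    (finite_sum_point_mass x) (finite_sum_point_mass y))); [|exact Hball].
  unfold fxor, point_mass; rewrite decide_true, decide_false; [reflexivity| |].
  - intros [Hlt _]; lra.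
  - split; [rewrite d_xx; auto | eapply admissible_uniformly_open; eauto].
Qed.

Lemma fnorm_point_mass_diff (x y : X) :
  fnorm (fxor (point_mass x) (point_mass y)) = d x y.
Proof.
  apply Rle_antisym.
  - apply wnorm_le; [apply d_ge0|]; intros B r HB Hr.
    apply Rnot_lt_le; intro Hlt; unfold fxor in HB.
    rewrite (point_mass_eq_near B r x y Hr Hlt), xorb_nilpotent in HB; discriminate.
  - destruct (classic (x = y)) as [<-|Hxy]; [rewrite d_xx; apply fnorm_ge0|].
    pose proof (d_le_weight x y).
    destruct (Rle_dec (d x y) (weight x)); [now apply fnorm_point_mass_diff_ge|].
    replace (fxor (point_mass x) (point_mass y)) with (fxor (point_mass y) (point_mass x))
      by fxor_ext.
    rewrite d_sym; apply fnorm_point_mass_diff_ge; [congruence | rewrite d_sym; rmax_lra].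
Qed.

Lemma fnorm_point_mass_ge1 (x : X) : 1 <= fnorm (point_mass x).
Proof.
  assert (Hall : admissible (fun _ => True) 1) by (apply admissible_of_open; auto; lra).
  apply (fnorm_ge _ (fun _ => True) _ (finite_sum_point_mass x)); [|auto].
  apply decide_true; split; [auto | eapply admissible_uniformly_open; eauto].
Qed.

Definition separation (c : X) (L : list X) : R :=
  fold_right (fun z s => if excluded_middle_informative (z = c) then s else Rmin (d c z) s)
    1 L.

Lemma separation_pos (c : X) (L : list X) : 0 < separation c L.
Proof.
  induction L as [|a L IH]; simpl; [lra|].
  destruct excluded_middle_informative as [|Hac]; [auto|].
  assert (0 < d c a) by (apply d_gt0; congruence); rmax_lra.
Qed.

Lemma separation_le1 (c : X) (L : list X) : separation c L <= 1.
Proof.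
  induction L as [|a L IH]; simpl; [lra|].
  destruct excluded_middle_informative; [auto | rmax_lra].
Qed.

Lemma separation_le_d (c : X) (L : list X) (z : X) :
  In z L -> z <> c -> separation c L <= d c z.
Proof.
  induction L as [|a L IH]; [intros []|]; simpl.
  intros [->|Hz] Hzc; destruct excluded_middle_informative; try contradiction.
  - rmax_lra.
  - now apply IH.
  - specialize (IH Hz Hzc); rmax_lra.
Qed.

Lemma fnorm_fsum_point_mass_ge (L : list X) (c x : X) (r : R) :
  NoDup L -> In c L -> 0 < r -> r <= 1 ->
  (forall z, In z L -> z <> c -> r <= d c z) -> r <= d c x ->
  r <= fnorm (fxor (fsum L) (point_mass x)).
Proof.
  intros HL Hc Hr Hr1 Hsep Hcx.
  assert (Hball : admissible (fun z => d c z < r) r)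
    by (apply ball_admissible; [auto | pose proof (weight_ge1 c); lra]).
  apply (fnorm_ge _ (fun z => d c z < r) _ (finite_sum_fxor _ _
    (ex_intro _ L eq_refl) (finite_sum_point_mass x))); [|exact Hball].
  unfold fxor; rewrite (fsum_isolated L c); auto.
  - unfold point_mass; rewrite decide_false; [reflexivity|]; intros [Hlt _]; lra.
  - simpl; rewrite d_xx; auto.
  - eapply admissible_uniformly_open; eauto.
  - intros z Hz Hzc Hlt; specialize (Hsep z Hz Hzc); lra.
Qed.

Lemma fnorm_fsum_point_mass_ge_separation (a b : X) (L : list X) (x : X) :
  NoDup (a :: b :: L) ->
  Rmin (separation a (a :: b :: L)) (separation b (a :: b :: L))
    <= fnorm (fxor (fsum (a :: b :: L)) (point_mass x)).
Proof.
  intro HL; set (LL := a :: b :: L) in *; set (r := Rmin (separation a LL) (separation b LL)).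
  assert (Hab : a <> b) by (inversion HL; intros ->; simpl in *; tauto).
  pose proof (separation_le_d a LL b ltac:(simpl; auto) ltac:(congruence)).
  pose proof (separation_le_d b LL a ltac:(simpl; auto) ltac:(congruence)).
  assert (Hc : exists c, In c LL /\ r <= separation c LL /\ r <= d c x).
  { pose proof (d_max a x b) as Hmax; rewrite (d_sym x b), (d_sym b a) in *.
    destruct (Rle_dec (d a b) (d a x)).
    - exists a; repeat split; [simpl; auto | unfold r; rmax_lra..].
    - exists b; repeat split; [simpl; auto | unfold r; rmax_lra..]. }
  destruct Hc as [c [HcL [Hrc Hcx]]].
  pose proof (separation_pos a LL); pose proof (separation_pos b LL).
  pose proof (separation_le1 c LL).
  apply (fnorm_fsum_point_mass_ge LL c x r); auto; [unfold r; rmax_lra | lra |].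
  intros z Hz Hzc; pose proof (separation_le_d c LL z Hz Hzc); lra.
Qed.

Lemma fsum_approx_point_mass (l : list X) :
  (forall eps, 0 < eps -> exists x, fnorm (fxor (fsum l) (point_mass x)) < eps) ->
  exists x, fsum l = point_mass x.
Proof.
  intro Happrox; destruct (fsum_nodup l) as [L [HL Hl]]; rewrite Hl in Happrox |- *.
  destruct L as [|a [|b L]].
  - destruct (Happrox 1) as [x Hx]; [lra|].
    change (fxor (fsum nil) (point_mass x)) with (point_mass x) in Hx.
    pose proof (fnorm_point_mass_ge1 x); exfalso; lra.
  - exists a; rewrite fsum_cons, fsum_nil; fxor_ext.
  - pose proof (separation_pos a (a :: b :: L)); pose proof (separation_pos b (a :: b :: L)).
    destruct (Happrox (Rmin (separation a (a :: b :: L)) (separation b (a :: b :: L))))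
      as [x Hx]; [rmax_lra|].
    pose proof (fnorm_fsum_point_mass_ge_separation a b L x HL); exfalso; lra.
Qed.

Definition E : Type := {f : F | finite_sum f}.

Definition E_add (u v : E) : E :=
  exist _ (fxor (proj1_sig u) (proj1_sig v)) (finite_sum_fxor _ _ (proj2_sig u) (proj2_sig v)).

Definition E_zero : E := exist _ fzero finite_sum_fzero.

Definition E_norm (u : E) : R := fnorm (proj1_sig u).

Definition E_embed (x : X) : E := exist _ (point_mass x) (finite_sum_point_mass x).

Lemma E_ext (u v : E) : proj1_sig u = proj1_sig v -> u = v.
Proof. destruct u, v; simpl; apply subset_eq_compat. Qed.

Lemma E_boolean_group : is_boolean_group E_add E_zero (fun u => u).
Proof.
  destruct (@fxor_boolean_group (X -> Prop)) as (Hassoc & Hcomm & H0 & Hopp & Hself).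
  repeat split; intros; apply E_ext; simpl; auto.
Qed.

Lemma E_ultranorm : is_ultranorm E_add E_zero (fun u => u) E_norm.
Proof.
  repeat split.
  - intro u; apply fnorm_ge0.
  - intro H; apply E_ext, fnorm_eq0; [apply proj2_sig | exact H].
  - intros ->; apply wnorm_fzero.
  - intros u v; apply fnorm_fxor_le; apply proj2_sig.
Qed.

Lemma E_embed_isometry (x y : X) : E_norm (E_add (E_embed x) (E_embed y)) = d x y.
Proof. apply fnorm_point_mass_diff. Qed.

Lemma E_embed_closed :
  metric_closed (fun u v => E_norm (E_add u v)) (fun u => exists x, u = E_embed x).
Proof.
  intros [f [l ->]] Happrox.
  destruct (fsum_approx_point_mass l) as [x Hx].
  - intros eps Heps; destruct (Happrox eps Heps) as [a [[x ->] Hax]]; now exists x.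
  - exists x; now apply E_ext.
Qed.

Section Action.

Variables (G : Type) (mul : G -> G -> G) (inv : G -> G) (e : G)
  (openG : (G -> Prop) -> Prop) (pi : G -> X -> X).
Hypotheses (G_group : is_group mul inv e) (pi_action : is_action mul e pi)
  (pi_unif : pi_uniform openG d pi).

Lemma pi_e (z : X) : pi e z = z.
Proof. apply pi_action. Qed.

Lemma pi_mul (g h : G) (z : X) : pi (mul g h) z = pi g (pi h z).
Proof. apply pi_action. Qed.

Lemma pi_inv (g : G) (z : X) : pi g (pi (inv g) z) = z.
Proof. rewrite <- pi_mul; destruct G_group as (_ & _ & _ & _ & ->); apply pi_e. Qed.

Definition translate (g : G) (f : F) : F := fun B => f (fun z => B (pi g z)).

Lemma uniformly_open_preimage (g : G) (B : X -> Prop) :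
  uniformly_open B -> uniformly_open (fun z => B (pi g z)).
Proof.
  intros [r [Hr Hopen]]; destruct (pi_unif r g Hr) as [delta [O [Hdelta [_ [Og Hmove]]]]].
  exists delta; split; [auto|]; intros u v Bu Huv; eapply Hopen; eauto.
Qed.

Lemma uniformly_open_preimage_iff (g : G) (B : X -> Prop) :
  uniformly_open (fun z => B (pi g z)) <-> uniformly_open B.
Proof.
  split; [|apply uniformly_open_preimage].
  intro H; apply (uniformly_open_preimage (inv g)) in H.
  replace B with (fun z => B (pi g (pi (inv g) z))); [exact H|].
  apply functional_extensionality; intro z; now rewrite pi_inv.
Qed.

Lemma translate_point_mass (g : G) (x : X) : translate g (point_mass x) = point_mass (pi g x).
Proof.
  apply functional_extensionality; intro B; apply decide_iff.
  now rewrite uniformly_open_preimage_iff.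
Qed.

Lemma translate_fsum (g : G) (l : list X) : translate g (fsum l) = fsum (map (pi g) l).
Proof.
  induction l as [|a l IH]; [reflexivity|].
  simpl map; rewrite !fsum_cons, <- IH, <- translate_point_mass; reflexivity.
Qed.

Lemma finite_sum_translate (g : G) (f : F) : finite_sum f -> finite_sum (translate g f).
Proof. intros [l ->]; exists (map (pi g) l); apply translate_fsum. Qed.

Lemma translate_e (f : F) : translate e f = f.
Proof.
  apply functional_extensionality; intro B; unfold translate.
  replace (fun z => B (pi e z)) with B; [reflexivity|].
  apply functional_extensionality; intro; now rewrite pi_e.
Qed.

Lemma translate_mul (g h : G) (f : F) : translate (mul g h) f = translate g (translate h f).
Proof.
  apply functional_extensionality; intro B; unfold translate.
  replace (fun z => B (pi (mul g h) z)) with (fun z => B (pi g (pi h z))); [reflexivity|].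
  apply functional_extensionality; intro; now rewrite pi_mul.
Qed.

Lemma fnorm_translate_le (h : G) (delta eps : R) (f : F) :
  0 <= eps -> (forall x y, d x y < delta -> d (pi h x) (pi h y) < eps) ->
  finite_sum f -> fnorm f < Rmin delta 1 -> fnorm (translate h f) <= eps.
Proof.
  intros Heps Hmove Hf Hsmall; apply wnorm_le; [auto|].
  intros B r HB [Hr [Hopen _]]; apply Rnot_lt_le; intro Hlt.
  assert (Hadm : admissible (fun z => B (pi h z)) (Rmin delta 1)).
  { apply admissible_of_open; [pose proof (fnorm_ge0 f); lra | rmax_lra|].
    intros u v Bu Huv; apply (Hopen (pi h u)); [auto|].
    assert (d (pi h u) (pi h v) < eps) by (apply Hmove; rmax_lra); lra. }
  pose proof (fnorm_ge f _ _ Hf HB Hadm); lra.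
Qed.

Lemma fnorm_translate_fsum_lt (g h : G) (l : list X) (eps : R) :
  0 < eps -> (forall x, In x l -> d (pi h x) (pi g x) < eps) ->
  fnorm (fxor (translate h (fsum l)) (translate g (fsum l))) < eps.
Proof.
  intros Heps; rewrite !translate_fsum.
  induction l as [|a l IH]; intros Hl.
  - change (fnorm fzero < eps); unfold fnorm; rewrite wnorm_fzero; lra.
  - simpl map; rewrite !fsum_cons.
    replace (fxor (fxor (point_mass (pi h a)) (fsum (map (pi h) l)))
                  (fxor (point_mass (pi g a)) (fsum (map (pi g) l))))
      with (fxor (fxor (point_mass (pi h a)) (point_mass (pi g a)))
                 (fxor (fsum (map (pi h) l)) (fsum (map (pi g) l)))) by fxor_ext.
    eapply Rle_lt_trans; [apply fnorm_fxor_le|].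
    + apply finite_sum_fxor; apply finite_sum_point_mass.
    + apply finite_sum_fxor; eexists; reflexivity.
    + rewrite fnorm_point_mass_diff.
      assert (d (pi h a) (pi g a) < eps) by (apply Hl; now left).
      assert (fnorm (fxor (fsum (map (pi h) l)) (fsum (map (pi g) l))) < eps)
        by (apply IH; intros; apply Hl; now right).
      rmax_lra.
Qed.

Definition E_act (g : G) (u : E) : E :=
  exist _ (translate g (proj1_sig u)) (finite_sum_translate g _ (proj2_sig u)).

Lemma E_act_action : is_action mul e E_act.
Proof. split; intros; apply E_ext; [apply translate_e | apply translate_mul]. Qed.

Lemma E_act_additive (g : G) : is_group_hom E_add (E_act g).
Proof. intros u v; now apply E_ext. Qed.

Lemma E_embed_equivariant (g : G) (x : X) : E_embed (pi g x) = E_act g (E_embed x).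
Proof. apply E_ext; symmetry; apply translate_point_mass. Qed.

Section Continuity.

Hypotheses (openG_topology : is_topology openG) (pi_continuous : action_continuous openG d pi).

Lemma displacement_small_near (g : G) (l : list X) (eps : R) : 0 < eps ->
  exists O, openG O /\ O g /\ forall h, O h -> forall x, In x l -> d (pi h x) (pi g x) < eps.
Proof.
  intro Heps; destruct openG_topology as (Hfull & Hinter & _).
  induction l as [|a l [O1 [HO1 [Og1 H1]]]]; [exists (fun _ => True); simpl; tauto|].
  destruct (pi_continuous g a eps Heps) as [O2 [delta [HO2 [Og2 [Hdelta H2]]]]].
  exists (fun h => O1 h /\ O2 h); repeat split; auto.
  intros h [Oh1 Oh2] x [<-|Hx]; [apply H2; [auto | rewrite d_xx; auto] | auto].
Qed.

Lemma translate_continuous (g : G) (l : list X) (eps : R) : 0 < eps ->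
  exists O delta, openG O /\ O g /\ 0 < delta /\
    forall h w, O h -> finite_sum w -> fnorm (fxor w (fsum l)) < delta ->
      fnorm (fxor (translate h w) (translate g (fsum l))) < eps.
Proof.
  intro Heps; destruct openG_topology as (_ & Hinter & _).
  destruct (pi_unif (eps / 2) g ltac:(lra)) as [delta [O1 [Hdelta [HO1 [Og1 H1]]]]].
  destruct (displacement_small_near g l eps Heps) as [O2 [HO2 [Og2 H2]]].
  exists (fun h => O1 h /\ O2 h), (Rmin delta 1); repeat split; auto; [rmax_lra|].
  intros h w [Oh1 Oh2] Hw Hsmall.
  replace (fxor (translate h w) (translate g (fsum l)))
    with (fxor (translate h (fxor w (fsum l)))
               (fxor (translate h (fsum l)) (translate g (fsum l))))
    by (unfold translate; fxor_ext).
  assert (Hfsum : finite_sum (fsum l)) by (now exists l).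
  eapply Rle_lt_trans; [apply fnorm_fxor_le|].
  - apply finite_sum_translate, finite_sum_fxor; auto.
  - apply finite_sum_fxor; apply finite_sum_translate; auto.
  - assert (fnorm (translate h (fxor w (fsum l))) <= eps / 2).
    { apply (fnorm_translate_le h delta); [lra | auto | now apply finite_sum_fxor | auto]. }
    pose proof (fnorm_translate_fsum_lt g h l eps Heps (H2 h Oh2)); rmax_lra.
Qed.

Lemma E_act_continuous : action_continuous openG (fun u v => E_norm (E_add u v)) E_act.
Proof.
  intros g [f [l ->]] eps Heps.
  destruct (translate_continuous g l eps Heps) as [O [delta [HO [Og [Hdelta Hcont]]]]].
  exists O, delta; repeat split; auto.
  intros h [w Hw] Oh Hsmall; exact (Hcont h w Oh Hw Hsmall).
Qed.

End Continuity.

End Action.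

End UltrametricSpace.

Theorem theorem6p5 (X G : Type) (d : X -> X -> R)
    (mul : G -> G -> G) (inv : G -> G) (e : G) (openG : (G -> Prop) -> Prop)
    (pi : G -> X -> X) (x0 : X) :
  is_ultrametric d ->
  is_topological_group mul inv e openG ->
  is_action mul e pi ->
  action_continuous openG d pi ->
  pi_uniform openG d pi ->
  bounded_orbit d pi x0 ->
  exists (E : Type) (add : E -> E -> E) (zero : E) (opp : E -> E) (nrm : E -> R)
         (act : G -> E -> E) (alpha : X -> E),
    is_boolean_group add zero opp /\
    is_ultranorm add zero opp nrm /\
    is_action mul e act /\
    (forall g, is_group_hom add (act g)) /\
    action_continuous openG (fun u v => nrm (add u (opp v))) act /\
    (forall g x, alpha (pi g x) = act g (alpha x)) /\
    (forall x y, nrm (add (alpha x) (opp (alpha y))) = d x y) /\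
    metric_closed (fun u v => nrm (add u (opp v))) (fun u => exists x, u = alpha x).
Proof.
  intros Hd [Hgroup [Htop _]] Hact Hcont Hunif _.
  exists (E X d), (E_add X d), (E_zero X d), (fun u => u), (E_norm X d x0),
    (E_act X d G mul inv e openG pi Hgroup Hact Hunif), (E_embed X d).
  split; [apply E_boolean_group|].
  split; [apply E_ultranorm|].
  split; [now apply E_act_action|].
  split; [intro; apply E_act_additive|].
  split; [now apply E_act_continuous|].
  split; [intros; now apply E_embed_equivariant|].
  split; [intros; now apply E_embed_isometry|].
  now apply E_embed_closed.
Qed.
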